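(* Consider two loci with $K$ alleles at locus A and $L$ at locus B, haplotype frequency path $\{X(t)=(X_{ij}(t)):t\in[0,T]\}$ in the simplex $\Delta_{KL-1}$ with marginals $X_{i\cdot}=\sum_l X_{il}$, $X_{\cdot j}=\sum_k X_{kj}$, and let $I_T=\int_0^T\sum_{i,j}\frac{(X_{ij}(t)-X_{i\cdot}(t)X_{\cdot j}(t))^2}{X_{ij}(t)}dt$ be finite and positive. For a known drift component $c$, define the recombination estimator $\hat\rho[c]=I_T^{-1}\int_0^T\sum_{i=1}^K\sum_{j=1}^L\frac{X_{i\cdot}(t)X_{\cdot j}(t)}{X_{ij}(t)}\,d\widetilde X^{c}_{ij}(t)$ with $\widetilde X^c_{ij}(t)=X_{ij}(t)-\int_0^tc_{ij}(X(s))ds$. Let $c^{\mathrm{mut}}_{ij}(x)=\frac{\theta_A}{2}\sum_{k}x_{kj}(P^A_{ki}-\delta_{ik})+\frac{\theta_B}{2}\sum_l x_{il}(P^B_{lj}-\delta_{jl})$ and $$c^{\mathrm{sel}}_{ij}(x)=c^{\mathrm{mut}}_{ij}(x)+\frac{x_{ij}}{2}\sum_{k=1}^K\sum_{l=1}^L\Big(s_{ij,kl}x_{kl}-\sum_{m=1}^K\sum_{n=1}^L s_{kl,mn}x_{kl}x_{mn}\Big).$$ If selection is non-epistatic, i.e. $s_{ij,kl}=s^A_{ik}+s^B_{jl}$ for some constants $s^A_{ik},s^B_{jl}$, then $\hat\rho[c^{\mathrm{sel}}]=\hat\rho[c^{\mathrm{mut}}]$.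
   Context: This is the model of a two-locus Wright--Fisher diffusion with recombination drift $\rho(x_{i\cdot}x_{\cdot j}-x_{ij})$, mutation at rates $\theta_A/2,\theta_B/2$ with stochastic transition matrices $P^A,P^B$, and diploid epistatic selection in which an individual carrying haplotypes $(i,j)$ and $(k,l)$ has selective parameter $s_{ij,kl}$; $\hat\rho[c]$ is the maximum-likelihood recombination estimator computed when the known part of the drift is taken to be $c$. *)

From mathcomp Require Import all_boot all_order all_algebra.
From mathcomp Require Import all_classical all_reals all_analysis.
Set Implicit Arguments. Unset Strict Implicit. Unset Printing Implicit Defensive.
Import Order.TTheory GRing.Theory Num.Theory.
Local Open Scope classical_set_scope.
Local Open Scope ring_scope.

Section TwoLocus.
Variables (R : realType) (K L : nat).

Definition hap := 'I_K -> 'I_L -> R.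

Definition margA (x : hap) (i : 'I_K) : R := \sum_(l < L) x i l.
Definition margB (x : hap) (j : 'I_L) : R := \sum_(k < K) x k j.

Definition in_simplex (x : hap) : Prop :=
  (forall i j, 0 <= x i j) /\ \sum_(i < K) \sum_(j < L) x i j = 1.

Definition stochastic_matrix n (P : 'I_n -> 'I_n -> R) : Prop :=
  (forall a b, 0 <= P a b) /\ (forall a, \sum_(b < n) P a b = 1).

Definition cmut (thA thB : R) (PA : 'I_K -> 'I_K -> R) (PB : 'I_L -> 'I_L -> R)
  (x : hap) (i : 'I_K) (j : 'I_L) : R :=
  thA / 2 * \sum_(k < K) x k j * (PA k i - (i == k)%:R)
  + thB / 2 * \sum_(l < L) x i l * (PB l j - (j == l)%:R).

Definition csel thA thB PA PB
  (s : 'I_K -> 'I_L -> 'I_K -> 'I_L -> R) (x : hap) (i : 'I_K) (j : 'I_L) : R :=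
  cmut thA thB PA PB x i j
  + x i j / 2 * \sum_(k < K) \sum_(l < L)
      (s i j k l * x k l
       - \sum_(m < K) \sum_(n < L) s k l m n * x k l * x m n).

Definition IT_integrand (X : R -> hap) (t : R) : R :=
  \sum_(i < K) \sum_(j < L)
     (X t i j - margA (X t) i * margB (X t) j) ^+ 2 / X t i j.

Definition IT (X : R -> hap) (T : R) : R :=
  Rintegral lebesgue_measure `[0, T] (IT_integrand X).

(* rho_hat[c], where the Ito integral
     S = int_0^T sum_ij X_i. X_.j / X_ij dX_ij(t)
   is supplied as the real number S, and
     int g dX~^c = int g dX - int g c(X(t)) dt. *)
Definition rho_hat (X : R -> hap) (T : R) (S : R) (c : hap -> 'I_K -> 'I_L -> R) : R :=
  (IT X T)^-1 *
  (S - Rintegral lebesgue_measure `[0, T]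
         (fun t => \sum_(i < K) \sum_(j < L)
                     margA (X t) i * margB (X t) j / X t i j * c (X t) i j)).

End TwoLocus.

From mathcomp Require Import all_boot all_order all_algebra.
From mathcomp Require Import all_classical all_reals all_analysis.
From mathcomp Require Import ring.
Set Implicit Arguments. Unset Strict Implicit. Unset Printing Implicit Defensive.
Import Order.TTheory GRing.Theory Num.Theory.
Local Open Scope classical_set_scope.
Local Open Scope ring_scope.

(* Subtracting the two estimators leaves I_T^-1 times the time integral of
   (1/2) sum_ij X_i. X_.j (w_ij - wbar), where w_ij = sum_kl s_ij,kl X_kl and
   wbar = sum_ij X_ij w_ij.  Without epistasis w_ij = a_i + b_j, and the mean of an
   additive function only depends on the marginals of the weights.  The product
   weights X_i. X_.j have the same marginals as X, so their mean of w is wbar and the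
   integrand vanishes at every t. *)

Lemma sum_prod_additive (R : comPzRingType) (m n : nat) (p : 'I_m -> R) (q : 'I_n -> R)
    (a : 'I_m -> R) (b : 'I_n -> R) :
  \sum_(i < m) p i = 1 -> \sum_(j < n) q j = 1 ->
  \sum_(i < m) \sum_(j < n) p i * q j * (a i + b j) =
  \sum_(i < m) p i * a i + \sum_(j < n) q j * b j.
Proof.
move=> p1 q1.
under eq_bigr => i _ do under eq_bigr => j _ do rewrite mulrDr.
under eq_bigr => i _ do rewrite big_split /=.
rewrite big_split /= [X in _ + X]exchange_big /=; congr (_ + _).
- by apply: eq_bigr => i _; rewrite -mulr_suml -mulr_sumr q1 mulr1.
- by apply: eq_bigr => j _; rewrite -mulr_suml -mulr_suml p1 mul1r.
Qed.

Section TwoLocusSelection.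
Variables (R : realType) (K L : nat).
Implicit Types (x : hap R K L) (s : 'I_K -> 'I_L -> 'I_K -> 'I_L -> R).

Lemma sum_joint_additive x (a : 'I_K -> R) (b : 'I_L -> R) :
  \sum_(i < K) \sum_(j < L) x i j * (a i + b j) =
  \sum_(i < K) margA x i * a i + \sum_(j < L) margB x j * b j.
Proof.
under eq_bigr => i _ do under eq_bigr => j _ do rewrite mulrDr.
under eq_bigr => i _ do rewrite big_split /=.
rewrite big_split /= [X in _ + X]exchange_big /=.
by congr (_ + _); apply: eq_bigr => ? _; rewrite mulr_suml.
Qed.

Definition fitness s x i j : R := \sum_(k < K) \sum_(l < L) s i j k l * x k l.

Definition mean_fitness s x : R := \sum_(i < K) \sum_(j < L) x i j * fitness s x i j.

Lemma cselE thA thB PA PB s x i j :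
  csel thA thB PA PB s x i j =
  cmut thA thB PA PB x i j + x i j / 2 * (fitness s x i j - mean_fitness s x).
Proof.
rewrite /csel; congr (_ + _ * _).
under eq_bigr => k _ do rewrite sumrB.
rewrite sumrB; congr (_ - _); apply: eq_bigr => k _; apply: eq_bigr => l _.
rewrite /fitness mulr_sumr; apply: eq_bigr => m _; rewrite mulr_sumr.
by apply: eq_bigr => n _; rewrite mulrCA mulrA.
Qed.

Section NonEpistatic.
Variables (s : 'I_K -> 'I_L -> 'I_K -> 'I_L -> R).
Variables (sA : 'I_K -> 'I_K -> R) (sB : 'I_L -> 'I_L -> R).
Hypothesis s_additive : forall i j k l, s i j k l = sA i k + sB j l.

Definition fitnessA x i : R := \sum_(k < K) margA x k * sA i k.
Definition fitnessB x j : R := \sum_(l < L) margB x l * sB j l.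

Lemma fitness_additive x i j : fitness s x i j = fitnessA x i + fitnessB x j.
Proof.
rewrite -sum_joint_additive; apply: eq_bigr => k _; apply: eq_bigr => l _.
by rewrite s_additive mulrC.
Qed.

Lemma mean_fitness_additive x :
  mean_fitness s x =
  \sum_(i < K) margA x i * fitnessA x i + \sum_(j < L) margB x j * fitnessB x j.
Proof.
rewrite -sum_joint_additive; apply: eq_bigr => i _; apply: eq_bigr => j _.
by rewrite fitness_additive.
Qed.

Lemma sum_marg_prod_selection x :
  \sum_(i < K) \sum_(j < L) x i j = 1 ->
  \sum_(i < K) \sum_(j < L)
    margA x i * margB x j * (fitness s x i j - mean_fitness s x) = 0.
Proof.
move=> x1.
have margA1 : \sum_(i < K) margA x i = 1 by [].
have margB1 : \sum_(j < L) margB x j = 1 by rewrite -x1 exchange_big.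
have prod1 : \sum_(i < K) \sum_(j < L) margA x i * margB x j = 1.
  by under eq_bigr => i _ do rewrite -mulr_sumr margB1 mulr1.
under eq_bigr => i _ do under eq_bigr => j _ do rewrite mulrBr fitness_additive.
under eq_bigr => i _ do rewrite sumrB.
rewrite sumrB sum_prod_additive // -mean_fitness_additive.
under [X in _ - X]eq_bigr => i _ do rewrite -mulr_suml.
by rewrite -mulr_suml prod1 mul1r subrr.
Qed.

Lemma rho_integrand_csel thA thB PA PB x :
  (forall i j, x i j != 0) -> \sum_(i < K) \sum_(j < L) x i j = 1 ->
  \sum_(i < K) \sum_(j < L) margA x i * margB x j / x i j * csel thA thB PA PB s x i j =
  \sum_(i < K) \sum_(j < L) margA x i * margB x j / x i j * cmut thA thB PA PB x i j.
Proof.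
move=> x_neq0 x1.
under eq_bigr => i _ do under eq_bigr => j _ do rewrite cselE mulrDr.
under eq_bigr => i _ do rewrite big_split /=.
rewrite big_split /= -[RHS]addr0; congr (_ + _).
rewrite -[RHS](mulr0 2^-1) -[in RHS](sum_marg_prod_selection x1) mulr_sumr.
apply: eq_bigr => i _; rewrite mulr_sumr; apply: eq_bigr => j _.
by field; rewrite x_neq0.
Qed.

End NonEpistatic.
End TwoLocusSelection.

Theorem mainTheorem7 (R : realType) (K L : nat) (T : R)
  (X : R -> hap R K L)
  (hX : forall t, t \in `[0, T] -> in_simplex (X t))
  (hpos : forall t, t \in `[0, T] -> forall i j, 0 < X t i j)
  (hIfin : lebesgue_measure.-integrable `[0, T] (fun t => (IT_integrand X t)%:E))
  (hIpos : 0 < IT X T)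
  (thA thB : R) (PA : 'I_K -> 'I_K -> R) (PB : 'I_L -> 'I_L -> R)
  (hPA : stochastic_matrix PA) (hPB : stochastic_matrix PB)
  (s : 'I_K -> 'I_L -> 'I_K -> 'I_L -> R)
  (sA : 'I_K -> 'I_K -> R) (sB : 'I_L -> 'I_L -> R)
  (hs : forall i j k l, s i j k l = sA i k + sB j l)
  (S : R) :
  rho_hat X T S (csel thA thB PA PB s) = rho_hat X T S (cmut thA thB PA PB).
Proof.
rewrite /rho_hat; congr (_ * (_ - _)); apply: eq_Rintegral => t t_in.
have {}t_in : t \in `[0, T] by move: t_in; rewrite inE.
have [_ X1] := hX t t_in.
rewrite (rho_integrand_csel hs) // => i j.
by rewrite gt_eqF // hpos.
Qed.
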